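(* Assume (L). Let $\beta\in(0,1/2)$ and let $\nu,\psi$ satisfy $0<\nu\le \frac23(\frac12-\beta)$ and $0<\psi\le\frac{1/2-\beta}{3/2-\beta}$. Let $x\in\mathcal N_\nu$ and let $\tilde H$ be a symmetric matrix with $(1-\psi)H(x)\preceq\tilde H\preceq(1+\psi)H(x)$, and put $p=-\tilde H^{-1}\nabla f(x)$. Then $$f(x+p)\le f(x)+\beta\nabla f(x)^\top p,$$ i.e., the Armijo condition holds with unit stepsize, so in the Algorithm (if $x_t=x$ and $\tilde H_t=\tilde H$) the backtracking line search returns $\mu_t=1$.
   Context: $f:\mathbb{R}^d\to\mathbb{R}$ is twice continuously differentiable with Hessian $H(x)=\nabla^2 f(x)$ satisfying $\lambda_{\min} I\preceq H(x)\preceq \lambda_{\max} I$ for all $x$, where $0<\lambda_{\min}\le\lambda_{\max}$; $x^\star$ is the unique minimizer of $f$ and $H^\star=H(x^\star)$. $\|\cdot\|$ is the Euclidean/spectral norm; $\|v\|_A=\sqrt{v^\top Av}$ for $A\succeq 0$. Lipschitz Hessian assumption (L): $\|H(x)-H(y)\|\le L\|x-y\|$ for all $x,y$. Neighborhood: $\mathcal N_\nu=\{x:\|x-x^\star\|_{H^\star}\le \nu\lambda_{\min}^{3/2}/L\}$. The Algorithm's line search: given direction $p_t$ with $\nabla f(x_t)^\top p_t<0$, $\mu_t=\rho^{j_t}$ with $\rho\in(0,1)$ and $j_t$ the smallest nonnegative integer such that $f(x_t+\mu_tp_t)\le f(x_t)+\mu_t\beta\nabla f(x_t)^\top p_t$.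 *)

From HB Require Import structures.
From mathcomp Require Import all_boot all_order all_algebra.
From mathcomp Require Import all_classical all_reals all_analysis.
Set Implicit Arguments. Unset Strict Implicit. Unset Printing Implicit Defensive.
Import Order.TTheory GRing.Theory Num.Theory.
Import numFieldNormedType.Exports.
Local Open Scope ring_scope.

Definition dotv (R : realType) (d : nat) (u v : 'cV[R]_d) : R := (u^T *m v) 0 0.

Definition enorm (R : realType) (d : nat) (v : 'cV[R]_d) : R := Num.sqrt (dotv v v).

Definition anorm (R : realType) (d : nat) (A : 'M[R]_d) (v : 'cV[R]_d) : R :=
  Num.sqrt (dotv v (A *m v)).

Definition loewner_le (R : realType) (d : nat) (A B : 'M[R]_d) : Prop :=
  forall v : 'cV[R]_d, 0 <= dotv v ((B - A) *m v).

(* spectral-norm bound ||A|| <= c, unfolded: ||A v|| <= c ||v|| for all v *)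
Definition opnorm_le (R : realType) (d : nat) (A : 'M[R]_d) (c : R) : Prop :=
  forall v : 'cV[R]_d, enorm (A *m v) <= c * enorm v.

From HB Require Import structures.
From mathcomp Require Import all_boot all_order all_algebra.
From mathcomp Require Import all_classical all_reals all_analysis.
From mathcomp Require Import ring lra.
Import Order.TTheory GRing.Theory Num.Theory.
Import numFieldNormedType.Exports.
Local Open Scope ring_scope.
Set Implicit Arguments. Unset Strict Implicit.

(* The Lipschitz Hessian gives the cubic upper model
     f (y + v) <= f y + g(y)^T v + v^T H(y) v / 2 + L |v|^3 / 6.
   At the minimizer the gradient vanishes, so in N_nu the gap f x - f x* is at
   most (1/2 + nu/6) nu^2 lmin^3 / L^2.  With a = -g(x)^T p and b = p^T H(x) p,
   the bounds on Ht give (1 - psi) b <= a.  Comparing the model along x + s p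
   with f x* bounds the step: L |p| <= 3 nu lmin <= (1 - 2 beta) lmin, so the
   cubic term is at most (1 - 2 beta) b / 6, and the model at s = 1 already
   lies below f x - beta a. *)

Section InnerProduct.
Variables (R : realType) (d : nat).
Implicit Types (u v w : 'cV[R]_d) (A B : 'M[R]_d) (a : R).

Lemma dotv_sum u v : dotv u v = \sum_i u i 0 * v i 0.
Proof. by rewrite /dotv mxE; apply: eq_bigr => i _; rewrite mxE. Qed.

Lemma dotvC u v : dotv u v = dotv v u.
Proof. by rewrite !dotv_sum; apply: eq_bigr => i _; rewrite mulrC. Qed.

Lemma dotvDl u v w : dotv (u + v) w = dotv u w + dotv v w.
Proof. by rewrite /dotv linearD /= mulmxDl mxE. Qed.

Lemma dotvZl a u w : dotv (a *: u) w = a * dotv u w.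
Proof. by rewrite /dotv linearZ /= -scalemxAl mxE. Qed.

Lemma dotvNl u w : dotv (- u) w = - dotv u w.
Proof. by rewrite -scaleN1r dotvZl mulN1r. Qed.

Lemma dotvBl u v w : dotv (u - v) w = dotv u w - dotv v w.
Proof. by rewrite dotvDl dotvNl. Qed.

Lemma dotvZr a u w : dotv w (a *: u) = a * dotv w u.
Proof. by rewrite dotvC dotvZl dotvC. Qed.

Lemma dotvBr u v w : dotv w (u - v) = dotv w u - dotv w v.
Proof. by rewrite dotvC dotvBl !(dotvC _ w). Qed.

Lemma dotv0r w : dotv w 0 = 0.
Proof. by rewrite /dotv mulmx0 mxE. Qed.

Lemma dotv_ge0 u : 0 <= dotv u u.
Proof. by rewrite dotv_sum; apply: sumr_ge0 => i _; rewrite -expr2 sqr_ge0. Qed.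

Lemma dotv_eq0 u : dotv u u = 0 -> u = 0.
Proof.
rewrite dotv_sum => /eqP; rewrite psumr_eq0 => [/allP u0|i _]; last first.
  by rewrite -expr2 sqr_ge0.
apply/matrixP => i j; rewrite (ord1 j) mxE.
by apply/eqP; rewrite -sqrf_eq0 expr2 (eqP (u0 i (mem_index_enum i))).
Qed.

Lemma enorm_ge0 u : 0 <= enorm u.
Proof. exact: sqrtr_ge0. Qed.

Lemma enorm_sq u : enorm u ^+ 2 = dotv u u.
Proof. by rewrite sqr_sqrtr // dotv_ge0. Qed.

Lemma enormZ a u : enorm (a *: u) = `|a| * enorm u.
Proof.
by rewrite /enorm dotvZl dotvZr mulrA -expr2 sqrtrM ?sqr_ge0 // sqrtr_sqr.
Qed.

Lemma dotv_le_enorm u w : dotv u w <= enorm u * enorm w.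
Proof.
set A := dotv u u; set B := dotv w w; set C := dotv u w.
suff CAB : C ^+ 2 <= A * B.
  rewrite (le_trans (ler_norm C)) // /enorm -sqrtrM ?dotv_ge0 // -sqrtr_sqr.
  by rewrite ler_sqrt // mulr_ge0 // dotv_ge0.
have [/dotv_eq0 w0|B0] := eqVneq B 0.
  by rewrite /C w0 dotv0r /B w0 dotv0r expr0n mulr0.
have Bp : 0 < B by rewrite lt_def B0 dotv_ge0.
(* expand [0 <= |B u - C w|^2 = B (A B - C^2)] *)
have := dotv_ge0 (B *: u - C *: w).
rewrite !dotvBl !dotvBr !dotvZl !dotvZr (dotvC w u) -/A -/B -/C => h.
have : 0 <= B * (A * B - C ^+ 2) by lra.
by rewrite pmulr_rge0 // subr_ge0.
Qed.

Lemma dotv_mulmxBl A B v :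
  dotv v ((A - B) *m v) = dotv v (A *m v) - dotv v (B *m v).
Proof. by rewrite mulmxBl dotvBr. Qed.

Lemma dotv_scalemxl a A v : dotv v ((a *: A) *m v) = a * dotv v (A *m v).
Proof. by rewrite -scalemxAl dotvZr. Qed.

Lemma loewner_le_scalar a A :
  loewner_le a%:M A <-> forall v, a * dotv v v <= dotv v (A *m v).
Proof.
by split=> aA v; have := aA v; rewrite dotv_mulmxBl mul_scalar_mx dotvZr subr_ge0.
Qed.

Lemma pos_def_unitmx a A : A^T = A -> 0 < a ->
  (forall v, a * dotv v v <= dotv v (A *m v)) -> A \in unitmx.
Proof.
move=> As a0 Apd; rewrite -row_free_unit; apply: inj_row_free => u uA0.
have Au0 : A *m u^T = 0 by rewrite -{1}As -trmx_mul uA0 trmx0.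
have := Apd u^T; rewrite Au0 dotv0r => h.
have : dotv u^T u^T = 0 by apply/eqP; rewrite eq_le -(pmulr_rle0 _ a0) h dotv_ge0.
by move=> /dotv_eq0 /(congr1 trmx); rewrite trmxK trmx0.
Qed.

End InnerProduct.

Section Calculus.
Variables (R : realType) (d : nat).
Implicit Types (u v w y : 'cV[R]_d).

Lemma differentiable_dotvl v w : differentiable (fun u => dotv u v) w.
Proof.
have -> : (fun u => dotv u v) = \sum_(i < d) (fun u : 'cV[R]_d => v i 0 *: u i 0).
  apply/funext => u; rewrite dotv_sum fct_sumE.
  by apply: eq_bigr => i _; rewrite mulrC.
by apply: differentiable_sum => i; apply/differentiableZ/differentiable_coord.
Qed.

Lemma diff_dotvl v w : 'd (fun u => dotv u v) w = (fun h => dotv h v) :> (_ -> R).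
Proof.
have lin : linear (fun u : 'cV[R]_d => dotv u v).
  by move=> a x y; rewrite dotvDl dotvZl.
pose dotL : {linear 'cV[R]_d -> R} :=
  HB.pack (fun u : 'cV[R]_d => dotv u v) (GRing.isLinear.Build _ _ _ _ _ lin).
apply: (@diff_lin _ _ _ dotL) => u.
exact/differentiable_continuous/differentiable_dotvl.
Qed.

Lemma is_derive_comp_line (F : 'cV[R]_d -> R) y v t :
  differentiable F (y + t *: v) ->
  is_derive t 1 (fun s : R => F (y + s *: v)) ('d F (y + t *: v) v).
Proof.
move=> dF.
have line := is_diffD (is_diff_cst y t) (is_diff_scalel t v).
have dline : differentiable (fun s : R => y + s *: v) t by case: line.
have dcomp := differentiable_comp dline dF.
apply: DeriveDef; first exact/derivable1_diffP.
rewrite -derive1E derive1E' // (diff_comp dline dF) /=.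
by rewrite (diff_val (is_diff_def := line)) /= add0r scale1r.
Qed.

Lemma is_derive_sub_cubic (F : R -> R) (dF a b c e t : R) :
  is_derive t 1 F dF ->
  is_derive t 1 (fun s => F s - (a + s * b + s ^+ 2 * c + s ^+ 3 * e))
    (dF - (b + 2 * t * c + 3 * t ^+ 2 * e)).
Proof.
move=> hF.
have hi := is_derive_id t (1 : R).
have hc := fun k : R => is_derive_cst k t (1 : R).
have h := is_deriveB hF (is_deriveD (is_deriveD (is_deriveD (hc a)
   (is_deriveM hi (hc b))) (is_deriveM (is_deriveM hi hi) (hc c)))
   (is_deriveM (is_deriveM hi (is_deriveM hi hi)) (hc e))).
apply: (is_derive_eq h).
rewrite /cst !scaler0 ![_%:A]mulr1 -![_ *: _]/(_ * _) /=.
by rewrite -[(id * id) t]/(t * t); ring.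
Qed.

Lemma le_at0_derive_le0 (h dh : R -> R) :
  (forall t : R, is_derive t (1 : R) h (dh t)) ->
  (forall t, 0 < t < 1 -> dh t <= 0) ->
  forall s, 0 <= s <= 1 -> h s <= h 0.
Proof.
move=> hd dh_le0 s /andP[s0 s1].
have der x : x \in `]0, 1[ -> derivable h x 1 by case: (hd x).
have le0 x : x \in `]0, 1[ -> derive1 h x <= 0.
  by rewrite in_itv /= derive1E (derive_val (is_derive := hd x)) => /dh_le0.
have cont := @derivable_within_continuous R R h `[0, 1] (fun x _ => @ex_derive _ _ _ _ _ _ _ (hd x)).
by apply: (ler0_derive1_le_cc der le0 cont); rewrite ?in_itv /= ?lexx ?ler01 ?s0 ?s1.
Qed.

End Calculus.

Lemma step_length_le (R : realFieldType) (lmin L nu r D : R) :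
  0 < lmin -> 0 <= L -> 0 < nu <= 1 / 3 -> 0 <= r ->
  L ^+ 2 * D <= (1 / 2 + nu / 6) * (nu ^+ 2 * lmin ^+ 3) ->
  (forall s, 0 <= s <= 1 -> s * (lmin * r ^+ 2) / 6 <= D + L * (s * r) ^+ 3 / 6) ->
  L * r <= 3 * nu * lmin.
Proof.
move=> l0 L0 /andP[n0 n3] r0 LD bound.
have [//|Lr_gt] := lerP (L * r) (3 * nu * lmin).
have Lr0 : 0 < L * r by apply: lt_trans Lr_gt; rewrite !mulr_gt0.
(* evaluate the bound at the step of length [s r = 2 nu lmin / L] *)
pose s := 2 * nu * lmin / (L * r).
have sLr : s * (L * r) = 2 * nu * lmin by rewrite divfK ?gt_eqF.
have s01 : 0 <= s <= 1.
  have nl : 0 < 2 * nu * lmin by rewrite !mulr_gt0.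
  rewrite /s divr_ge0 ?(ltW nl) ?(ltW Lr0) //= ler_pdivrMr // mul1r; nra.
have := ler_wpM2l (sqr_ge0 L) (bound s s01).
have -> : L ^+ 2 * (s * (lmin * r ^+ 2) / 6) = lmin * (s * (L * r)) * (L * r) / 6 by ring.
have -> : L ^+ 2 * (D + L * (s * r) ^+ 3 / 6) = L ^+ 2 * D + (s * (L * r)) ^+ 3 / 6 by ring.
rewrite sLr => key.
have : lmin * (2 * nu * lmin) * (L * r) / 6 <= nu ^+ 2 * lmin ^+ 3.
  have cube : (2 * nu * lmin) ^+ 3 / 6 = 4 / 3 * nu * (nu ^+ 2 * lmin ^+ 3) by field.
  rewrite cube in key.
  have : 0 <= nu ^+ 2 * lmin ^+ 3 by rewrite mulr_ge0 ?sqr_ge0 ?exprn_ge0 ?(ltW l0).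
  nra.
have -> : nu ^+ 2 * lmin ^+ 3 = lmin * (2 * nu * lmin) * (3 * nu * lmin) / 6 by field.
by rewrite ler_pM2r // ler_pM2l ?mulr_gt0 // leNgt Lr_gt.
Qed.

Section SmoothFunction.
Variables (R : realType) (d : nat).
Variables (f : 'cV[R]_d -> R) (g : 'cV[R]_d -> 'cV[R]_d) (H : 'cV[R]_d -> 'M[R]_d).
Variable L : R.
Hypothesis hf : forall x, differentiable f x /\ forall v, 'd f x v = dotv (g x) v.
Hypothesis hg : forall x, differentiable g x /\ forall v, 'd g x v = H x *m v.
Hypothesis hL : forall x y, opnorm_le (H x - H y) (L * enorm (x - y)).
Implicit Types (x y v : 'cV[R]_d).

Lemma is_derive_f_line y v (t : R) :
  is_derive t 1 (fun s : R => f (y + s *: v)) (dotv (g (y + t *: v)) v).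
Proof. by have [df <-] := hf (y + t *: v); exact: is_derive_comp_line. Qed.

Lemma gradient_eq0_at_min x : (forall y, f x <= f y) -> forall v, dotv (g x) v = 0.
Proof.
move=> xmin v.
have f_line0 : is_derive (0 : R) (1 : R) (fun s : R => f (x + s *: v)) 0.
  apply: (@derive1_at_min R _ (-1) 1 0); rewrite ?in_itv /= ?ltrN10 ?ltr01 //.
  - by move=> t _; case: (is_derive_f_line x v t).
  - by move=> t _; rewrite scale0r addr0.
have := derive_val (is_derive := is_derive_f_line x v 0).
by rewrite (derive_val (is_derive := f_line0)) scale0r addr0.
Qed.

Lemma is_derive_g_line y v (t : R) :
  is_derive t 1 (fun s : R => dotv (g (y + s *: v)) v) (dotv (H (y + t *: v) *m v) v).
Proof.
have [dg dgv] := hg (y + t *: v).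
have dcomp := differentiable_comp dg (differentiable_dotvl v (g (y + t *: v))).
have -> : dotv (H (y + t *: v) *m v) v = 'd ((fun u => dotv u v) \o g) (y + t *: v) v.
  by rewrite (diff_comp dg (differentiable_dotvl _ _)) /= diff_dotvl dgv.
exact: is_derive_comp_line dcomp.
Qed.

Lemma curvature_change_le y v (t : R) : 0 <= t ->
  dotv (H (y + t *: v) *m v) v - dotv (H y *m v) v <= t * (L * enorm v ^+ 3).
Proof.
move=> t0; rewrite !(dotvC _ v) -dotvBr -mulmxBl.
have := hL (y + t *: v) y v; rewrite /opnorm_le addrAC subrr add0r.
rewrite enormZ ger0_norm // => HvL.
have -> : t * (L * enorm v ^+ 3) = enorm v * (L * (t * enorm v) * enorm v) by ring.
exact: le_trans (dotv_le_enorm _ _) (ler_wpM2l (enorm_ge0 v) HvL).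
Qed.

Lemma taylor_cubic_upper y v :
  f (y + v) <= f y + dotv (g y) v + dotv v (H y *m v) / 2 + L * enorm v ^+ 3 / 6.
Proof.
pose phi s := f (y + s *: v); pose psi s := dotv (g (y + s *: v)) v.
set q := dotv (H y *m v) v; set c := L * enorm v ^+ 3.
(* integrate the Lipschitz bound on [psi' = v^T H v] twice *)
have psi_le s : 0 <= s <= 1 -> psi s <= psi 0 + s * q + s ^+ 2 * (c / 2).
  have dpsi_le t : 0 < t < 1 ->
      dotv (H (y + t *: v) *m v) v - (q + 2 * t * (c / 2) + 3 * t ^+ 2 * 0) <= 0.
    by case/andP=> t0 _; have := curvature_change_le y v (ltW t0); rewrite -/q -/c; nra.
  move=> s01; have := le_at0_derive_le0
    (fun t => is_derive_sub_cubic (psi 0) q (c / 2) 0 (is_derive_g_line y v t)) dpsi_le s01.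
  by rewrite -/(psi s) -/(psi 0); lra.
have dphi_le t : 0 < t < 1 ->
    psi t - (psi 0 + 2 * t * (q / 2) + 3 * t ^+ 2 * (c / 6)) <= 0.
  case/andP=> t0 t1; have /psi_le : 0 <= t <= 1 by rewrite (ltW t0) (ltW t1).
  lra.
have := le_at0_derive_le0
  (fun t => is_derive_sub_cubic (phi 0) (psi 0) (q / 2) (c / 6) (is_derive_f_line y v t))
  dphi_le (_ : 0 <= 1 <= 1).
rewrite /phi /psi !scale0r !addr0 scale1r (dotvC v) -/q ler01 lexx.
lra.
Qed.

Variable lmin : R.
Hypothesis hL0 : 0 <= L.
Hypothesis hlmin : 0 < lmin.
Hypothesis hHlow : forall x v, lmin * dotv v v <= dotv v (H x *m v).

Lemma armijo_unit_step (x p : 'cV[R]_d) (fmin beta nu psi : R) :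
  (forall y, fmin <= f y) ->
  0 < beta < 1 / 2 -> 0 < nu -> 3 * nu <= 1 - 2 * beta ->
  psi * (3 / 2 - beta) <= 1 / 2 - beta ->
  L ^+ 2 * (f x - fmin) <= (1 / 2 + nu / 6) * (nu ^+ 2 * lmin ^+ 3) ->
  (1 - psi) * dotv p (H x *m p) <= - dotv (g x) p ->
  f (x + p) <= f x + beta * dotv (g x) p.
Proof.
move=> fmin_le /andP[b0 b12] n0 nb psib fx_near curv.
set a := - dotv (g x) p in curv *; set b := dotv p (H x *m p) in curv.
set r := enorm p.
have r0 : 0 <= r := enorm_ge0 p.
have br : lmin * r ^+ 2 <= b by rewrite enorm_sq; exact: hHlow.
have b0' : 0 <= b by apply: le_trans br; rewrite mulr_ge0 ?sqr_ge0 ?(ltW hlmin).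
have psi3 : psi <= 1 / 3 by nra.
have ba : b <= (3 / 2 - beta) * a by nra.
have ab : 2 / 3 * b <= a by nra.
have taylor s : 0 <= s ->
    f (x + s *: p) <= f x - s * a + s ^+ 2 * b / 2 + L * (s * r) ^+ 3 / 6.
  move=> s0; have := taylor_cubic_upper x (s *: p).
  rewrite dotvZr -scalemxAr !dotvZl dotvZr -/b enormZ ger0_norm // -/r /a.
  by rewrite mulrN opprK expr2 mulrA.
have Lr : L * r <= 3 * nu * lmin.
  apply: (step_length_le hlmin hL0 _ r0 fx_near) => [|s /andP[s0 s1]].
    by rewrite n0 /=; lra.
  have := fmin_le (x + s *: p); have := taylor s s0.
  have : s ^+ 2 * b <= s * b by rewrite expr2 ler_wpM2r //; nra.
  nra.
have := taylor 1 ler01; rewrite scale1r !mul1r expr1n mul1r.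
have : L * r ^+ 3 <= (1 - 2 * beta) * b.
  have -> : L * r ^+ 3 = (L * r) * r ^+ 2 by ring.
  have : (L * r) * r ^+ 2 <= (3 * nu * lmin) * r ^+ 2 by rewrite ler_wpM2r ?sqr_ge0.
  nra.
(* b/2 + L r^3/6 <= (2 - beta) b/3 <= (3/2 - beta) (2 - beta) a/3 <= (1 - beta) a *)
have a0 : 0 <= a by lra.
have : beta * (1 / 2 - beta) * a >= 0 by rewrite !mulr_ge0 //; lra.
have -> : dotv (g x) p = - a by rewrite opprK.
nra.
Qed.

Lemma suboptimality_near_min (xs x : 'cV[R]_d) (nu : R) :
  (forall y, f xs <= f y) -> 0 <= nu ->
  L * anorm (H xs) (x - xs) <= nu * (lmin * Num.sqrt lmin) ->
  L ^+ 2 * (f x - f xs) <= (1 / 2 + nu / 6) * (nu ^+ 2 * lmin ^+ 3).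
Proof.
move=> xs_min n0; rewrite /anorm; set e := x - xs; set Q := dotv e (H xs *m e).
set r := enorm e => near.
have r0 : 0 <= r := enorm_ge0 e.
have Qr : lmin * r ^+ 2 <= Q by rewrite enorm_sq; exact: hHlow.
have Q0 : 0 <= Q by apply: le_trans Qr; rewrite mulr_ge0 ?sqr_ge0 ?(ltW hlmin).
have LQ : L ^+ 2 * Q <= nu ^+ 2 * lmin ^+ 3.
  have LsQ0 : 0 <= L * Num.sqrt Q by rewrite mulr_ge0 ?sqrtr_ge0.
  have := ler_pM LsQ0 LsQ0 near near.
  have sQ := sqr_sqrtr Q0; have sl := sqr_sqrtr (ltW hlmin).
  have -> : L * Num.sqrt Q * (L * Num.sqrt Q) = L ^+ 2 * Num.sqrt Q ^+ 2 by ring.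
  have -> : nu * (lmin * Num.sqrt lmin) * (nu * (lmin * Num.sqrt lmin))
    = nu ^+ 2 * lmin ^+ 2 * Num.sqrt lmin ^+ 2 by ring.
  by rewrite sQ sl -mulrA -exprSr.
have Lr : L * r <= nu * lmin.
  rewrite -ler_sqr ?nnegrE ?mulr_ge0 ?(ltW hlmin) // -(ler_pM2l hlmin).
  have := ler_wpM2l (sqr_ge0 L) Qr.
  have -> : lmin * (nu * lmin) ^+ 2 = nu ^+ 2 * lmin ^+ 3 by ring.
  by rewrite exprMn mulrCA => h; apply: le_trans h LQ.
have := taylor_cubic_upper xs e.
rewrite /e addrC subrK -/e -/r (gradient_eq0_at_min xs_min) addr0 -/Q.
have : L * r ^+ 3 <= nu * Q.
  apply: le_trans (_ : nu * lmin * r ^+ 2 <= _); last by rewrite -mulrA ler_wpM2l.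
  by rewrite exprS mulrA ler_wpM2r ?sqr_ge0.
move=> Lr3 taylor; have gap : f x - f xs <= (1 / 2 + nu / 6) * Q by nra.
apply: le_trans (ler_wpM2l (sqr_ge0 L) gap) _.
by rewrite mulrCA ler_wpM2l //; lra.
Qed.

End SmoothFunction.

Unset Implicit Arguments. Set Strict Implicit.

Theorem mainTheorem5 (R : realType) (d : nat)
  (f : 'cV[R]_d -> R) (g : 'cV[R]_d -> 'cV[R]_d) (H : 'cV[R]_d -> 'M[R]_d)
  (lmin lmax L : R) (xstar : 'cV[R]_d)
  (hf : forall x, differentiable f x /\ forall v, 'd f x v = dotv (g x) v)
  (hg : forall x, differentiable g x /\ forall v, 'd g x v = H x *m v)
  (hHc : continuous H)
  (hlmin : 0 < lmin) (hlminmax : lmin <= lmax)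
  (hHb : forall x, loewner_le (lmin%:M) (H x) /\ loewner_le (H x) (lmax%:M))
  (hxmin : forall y, f xstar <= f y)
  (hxuniq : forall y, (forall z, f y <= f z) -> y = xstar)
  (* assumption (L): Lipschitz Hessian *)
  (hL0 : 0 <= L)
  (hL : forall x y, opnorm_le (H x - H y) (L * enorm (x - y)))
  (beta nu psi : R)
  (hbeta : 0 < beta < 1 / 2)
  (hnu : 0 < nu <= 2 / 3 * (1 / 2 - beta))
  (hpsi : 0 < psi <= (1 / 2 - beta) / (3 / 2 - beta))
  (x : 'cV[R]_d)
  (* x in N_nu : ||x - x*||_{H*} <= nu lmin^{3/2} / L, written multiplicatively *)
  (hx : L * anorm (H xstar) (x - xstar) <= nu * (lmin * Num.sqrt lmin))
  (Ht : 'M[R]_d)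
  (hHt_sym : Ht^T = Ht)
  (hHt : loewner_le ((1 - psi) *: H x) Ht /\ loewner_le Ht ((1 + psi) *: H x)) :
  let p := - (invmx Ht *m g x) in
  f (x + p) <= f x + beta * dotv (g x) p.
Proof.
cbv zeta; set p := - (invmx Ht *m g x).
case/andP: hbeta => beta0 beta_lt; case/andP: hnu => nu0 nu_le.
have psi_le : psi * (3 / 2 - beta) <= 1 / 2 - beta.
  by rewrite -ler_pdivlMr ?(andP hpsi).2 //; lra.
have psi_lt1 : 0 < 1 - psi by nra.
have Hlow y : forall v, lmin * dotv v v <= dotv v (H y *m v).
  exact/loewner_le_scalar/(hHb y).1.
have Ht_approx v : (1 - psi) * dotv v (H x *m v) <= dotv v (Ht *m v).
  by have := hHt.1 v; rewrite dotv_mulmxBl dotv_scalemxl subr_ge0.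
have Ht_unit : Ht \in unitmx.
  apply: (@pos_def_unitmx _ _ ((1 - psi) * lmin)) => // [|v].
    exact: mulr_gt0.
  by apply: le_trans (Ht_approx v); rewrite -mulrA ler_wpM2l ?Hlow ?ltW.
have gx : g x = - (Ht *m p) by rewrite mulmxN mulmxA mulmxV // mul1mx opprK.
apply: (armijo_unit_step hf hg hL hL0 hlmin Hlow hxmin _ nu0 _ psi_le).
- by rewrite beta0 beta_lt.
- by lra.
- exact: (suboptimality_near_min hf hg hL hL0 hlmin Hlow hxmin (ltW nu0) hx).
- by rewrite gx (dotvNl (Ht *m p)) opprK (dotvC (Ht *m p)).
Qed.
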